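(* In the setting of the addition algorithm, for every $\varphi\in\mathbb{R}^V$: $\tau(v)=\tau_1(v,\cdot)\ge\tau_2(v,\cdot)\ge\cdots\ge\tau_{|V|}(v,\cdot)\ge0$ pointwise for every $v\in V$; $s_k\in[0,\tau(P_k)]$ for $1\le k\le|V|$; and $s_1\le s_2\le\cdots\le s_{|V|}$. In particular $0\le T^+(\varphi)_v-\varphi_v=\varphi_v-T^-(\varphi)_v\le\tau(v)$ for all $v$.
   Context: Addition algorithm. Let $G=(V,E)$ be a finite connected graph ($v\sim w$ means $(v,w)\in E$), $\tau:V\to[0,\infty)$, $0<\varepsilon\le1/2$, and fix a total order $\preceq$ on $V$. Let $f:\mathbb{R}\to\mathbb{R}$ be $f(x)=0$ for $|x|\ge1$, $f(x)=(1+x)/\varepsilon$ on $[-1,-1+\varepsilon]$, $f(x)=1$ on $[-1+\varepsilon,1-\varepsilon]$, $f(x)=(1-x)/\varepsilon$ on $[1-\varepsilon,1]$. For $v\in V$, $h,t\in\mathbb{R}$ let $m_{v,h,t}(h')=\min(\tau(v)-t,\varepsilon/2)f(h'-h)+t$ if $\tau(v)\ge t$, and $m_{v,h,t}(h')=t$ if $\tau(v)<t$. On input $\varphi\in\mathbb{R}^V$ the algorithm outputs an ordering $P_1,\dots,P_{|V|}$ of $V$, numbers $s_k$ and functions $\tau_k:V\times\mathbb{R}\to\mathbb{R}$: set $\tau_1(v,h)=\tau(v)$; for $k=1,\dots,|V|$: let $P_k$ be the vertex $v\in V\setminus\{P_1,\dots,P_{k-1}\}$ minimizing $\tau_k(v,\varphi_v)$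 (ties broken by taking the $\preceq$-smallest); set $s_k=\tau_k(P_k,\varphi_{P_k})$; if $k<|V|$ set $\tau_{k+1}(v,h)=\tau_k(v,h)$ if $v\in\{P_1,\dots,P_k\}$ or $v\not\sim P_k$, and $\tau_{k+1}(v,h)=\min(\tau_k(v,h),m_{v,\varphi_{P_k},s_k}(h))$ otherwise. Define $T^+(\varphi)_{P_k}=\varphi_{P_k}+s_k$ ($1\le k\le|V|$) and $T^-(\varphi)=2\varphi-T^+(\varphi)$. *)

From HB Require Import structures.
From mathcomp Require Import all_boot all_order all_algebra.
Set Implicit Arguments. Unset Strict Implicit. Unset Printing Implicit Defensive.
Import Order.TTheory GRing.Theory Num.Theory.
Local Open Scope ring_scope.

Section Addition.
Variables (R : realFieldType) (V : finType) (e : rel V) (tau : V -> R)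
          (eps : R) (le : rel V) (phi : V -> R).

Definition fbump (x : R) : R :=
  if 1 <= `|x| then 0
  else if x <= -1 + eps then (1 + x) / eps
  else if x <= 1 - eps then 1
  else (1 - x) / eps.

Definition mfun (v : V) (h t h' : R) : R :=
  if t <= tau v then Num.min (tau v - t) (eps / 2) * fbump (h' - h) + t
  else t.

(* state after some steps: chosen vertices P_1..P_k, values s_1..s_k,
   and the current function tau_{k+1} *)
Record alg_state := AlgState {
  chosen : seq V;
  svals : seq R;
  tauf : V -> R -> R }.

Definition init_state : alg_state := AlgState [::] [::] (fun v _ => tau v).

Definition select (tk : V -> R -> R) (P : seq V) : option V :=
  [pick v | (v \notin P) &&
     [forall w, (w \notin P) ==>
        ((tk v (phi v) < tk w (phi w)) ||
         ((tk v (phi v) == tk w (phi w)) && le v w))]].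

Definition step (st : alg_state) : alg_state :=
  match select (tauf st) (chosen st) with
  | None => st
  | Some p =>
      let s := tauf st p (phi p) in
      let P' := rcons (chosen st) p in
      AlgState P' (rcons (svals st) s)
        (fun v h => if (v \in P') || ~~ e v p then tauf st v h
                    else Num.min (tauf st v h) (mfun v (phi p) s h))
  end.

Definition final_state : alg_state := iter #|V| step init_state.

(* tau_k, for k >= 1 *)
Definition tau_k (k : nat) : V -> R -> R := tauf (iter k.-1 step init_state).

(* P_k and s_k, for 1 <= k <= |V| *)
Definition P_k (v0 : V) (k : nat) : V := nth v0 (chosen final_state) k.-1.
Definition s_k (k : nat) : R := nth 0 (svals final_state) k.-1.

Definition Tplus (v : V) : R :=
  phi v + nth 0 (svals final_state) (index v (chosen final_state)).
Definition Tminus (v : V) : R := 2 * phi v - Tplus v.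

End Addition.

From mathcomp Require Import all_boot all_order all_algebra.
From mathcomp Require Import lra.
Set Implicit Arguments. Unset Strict Implicit. Unset Printing Implicit Defensive.
Import Order.TTheory GRing.Theory Num.Theory.
Local Open Scope ring_scope.

(* The update replaces tau_k(v, .) by its minimum with m_{v, phi(P_k), s_k},
   and m_{v,h,t} >= t because f >= 0; so tau_k only decreases and stays in
   [0, tau v].  Since s_k is the least current value tau_k(w, phi w) over the
   unchosen w, and every updated value is >= s_k, all values seen later are
   >= s_k, whence s_k <= s_(k+1).  The bounds on T^+ - phi are those on s_k. *)

Lemma fbump_ge0 (R : realFieldType) (eps x : R) : 0 <= eps -> 0 <= fbump eps x.
Proof.
move=> eps_ge0; rewrite /fbump; case: ifP => // /negbT.
rewrite -ltNge ltr_norml => /andP[x_gtN1 x_lt1].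
by case: ifP => _; [|case: ifP => _ //]; apply: divr_ge0 => //; lra.
Qed.

Lemma mfun_ge (R : realFieldType) (V : finType) (tau : V -> R) (eps : R)
    v h t h' :
  0 <= eps -> t <= mfun tau eps v h t h'.
Proof.
rewrite /mfun => eps_ge0; case: ifP => // t_le_tau.
rewrite lerDr mulr_ge0 ?fbump_ge0 // le_min subr_ge0 t_le_tau.
by rewrite divr_ge0.
Qed.

Lemma sorted_rcons_ub (T : eqType) (r : rel T) (s : seq T) (y : T) :
  sorted r s -> {in s, forall x, r x y} -> sorted r (rcons s y).
Proof. by case: s => //= x t; rewrite rcons_path => -> ub; apply/ub/mem_last. Qed.

Lemma uniq_card_perm_enum (T : finType) (s : seq T) :
  uniq s -> size s = #|T| -> perm_eq s (enum T).
Proof.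
move=> s_uniq s_size; apply: uniq_perm; rewrite ?enum_uniq //.
by case: (uniq_min_size s_uniq (fun x _ => mem_enum T x)); rewrite ?s_size -?cardT.
Qed.

Section Selection.
Variables (R : realFieldType) (V : finType) (le : rel V) (phi : V -> R).
Hypotheses (tie_trans : transitive le) (tie_total : total le).
Variable tk : V -> R -> R.

Definition lex : rel V := fun v w =>
  (tk v (phi v) < tk w (phi w)) ||
  ((tk v (phi v) == tk w (phi w)) && le v w).

Lemma lex_total : total lex.
Proof.
by move=> v w; rewrite /lex; case: ltgtP => //= _; rewrite tie_total.
Qed.

Lemma lex_trans : transitive lex.
Proof.
move=> w u v; rewrite /lex.
case/orP=> [lt_uw|/andP[/eqP eq_uw le_uw]] /orP[lt_wv|/andP[/eqP eq_wv le_wv]].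
- by rewrite (lt_trans lt_uw lt_wv).
- by rewrite -eq_wv lt_uw.
- by rewrite eq_uw lt_wv.
- by rewrite eq_uw eq_wv eqxx (tie_trans le_uw le_wv) orbT.
Qed.

Lemma lex_min_exists (s : seq V) :
  s != [::] -> exists2 x, x \in s & {in s, forall y, lex x y}.
Proof.
move=> s_nil; have := sort_sorted lex_total s.
have := mem_sort lex s; have := size_sort lex s.
case: (sort lex s) => [|x t] size_s mem_s /=.
  by move: s_nil; rewrite -size_eq0 -size_s.
move=> /(order_path_min lex_trans) /allP x_min.
exists x; first by rewrite -mem_s mem_head.
move=> y; rewrite -mem_s inE => /predU1P[->|/x_min //].
by case/orP: (lex_total x x).
Qed.

Lemma select_Some (P : seq V) (p : V) : select le phi tk P = Some p ->
  p \notin P /\ forall w, w \notin P -> tk p (phi p) <= tk w (phi w).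
Proof.
rewrite /select; case: pickP => // x /andP[xP /forallP x_min] [<-].
split=> // w wP; move: (x_min w); rewrite wP /=.
by case/orP=> [/ltW //|/andP[/eqP -> _]].
Qed.

Lemma select_None (P : seq V) : select le phi tk P = None -> forall v, v \in P.
Proof.
rewrite /select; case: pickP => // no_min _ v; apply/negPn/negP => vP.
have [|x] := @lex_min_exists [seq w <- enum V | w \notin P].
  by apply/eqP => /(congr1 (fun s => v \in s)); rewrite mem_filter vP mem_enum.
rewrite mem_filter => /andP[xP _] x_min.
have /negP := no_min x; rewrite xP; apply; apply/forallP => w.
by apply/implyP => wP; apply: x_min; rewrite mem_filter wP mem_enum.
Qed.

End Selection.

Section Algorithm.
Variables (R : realFieldType) (V : finType) (e : rel V) (tau : V -> R)
          (eps : R) (le : rel V) (phi : V -> R).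
Hypotheses (tau_ge0 : forall v, 0 <= tau v) (eps_ge0 : 0 <= eps).
Hypotheses (tie_trans : transitive le) (tie_total : total le).

Local Notation step := (step e tau eps le phi).
Local Notation state k := (iter k step (init_state tau)).

Record invariant (st : alg_state R V) : Prop := Invariant {
  chosen_uniq : uniq (chosen st);
  size_svals : size (svals st) = size (chosen st);
  tauf_bounds : forall v h, 0 <= tauf st v h <= tau v;
  svals_bounds : forall v0 i, (i < size (svals st))%N ->
    0 <= nth 0 (svals st) i <= tau (nth v0 (chosen st) i);
  svals_sorted : sorted <=%R (svals st);
  svals_le_pending : forall x v, x \in svals st -> v \notin chosen st ->
    x <= tauf st v (phi v) }.

Lemma tauf_step_le st v h : tauf (step st) v h <= tauf st v h.
Proof.
rewrite /step; case: select => //= p.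
by case: ifP => // _; rewrite ge_min lexx.
Qed.

Lemma invariant_init : invariant (init_state tau).
Proof. by split=> // v h; rewrite lexx tau_ge0. Qed.

Lemma invariant_step st : invariant st -> invariant (step st).
Proof.
case=> st_uniq st_size st_tauf st_bounds st_sorted st_pending.
rewrite /step; case sel: select => [p|] //=.
have [pP p_min] := select_Some sel.
set s := tauf st p (phi p); set P' := rcons (chosen st) p.
have /andP[s_ge0 s_le] : 0 <= s <= tau p by apply: st_tauf.
have s_le_new v h : v \notin P' ->
    s <= (if (v \in P') || ~~ e v p then tauf st v (phi v)
          else Num.min (tauf st v (phi v)) (mfun tau eps v (phi p) s h)).
  rewrite mem_rcons inE negb_or => /andP[vp vP]; rewrite (negbTE vp) (negbTE vP).
  by case: ifP => _ /=; rewrite ?le_min ?p_min ?mfun_ge.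
have svals_le_s x : x \in svals st -> x <= s by move/st_pending; apply.
split.
- by rewrite rcons_uniq pP st_uniq.
- by rewrite !size_rcons st_size.
- move=> v h /=; case: ifP => _; first exact: st_tauf.
  have /andP[t_ge0 t_le] := st_tauf v h.
  by rewrite le_min t_ge0 ge_min t_le (le_trans s_ge0) ?mfun_ge.
- move=> v0 i; rewrite size_rcons ltnS leq_eqVlt => /predU1P[->|i_lt].
    by rewrite !nth_rcons st_size ltnn eqxx s_ge0.
  by rewrite !nth_rcons -st_size i_lt st_bounds.
- exact: sorted_rcons_ub.
- move=> x v; rewrite mem_rcons inE => /predU1P[->|/svals_le_s x_le] vP'.
    exact: (s_le_new v (phi v)).
  exact: le_trans x_le (s_le_new v (phi v) vP').
Qed.

Lemma invariant_state k : invariant (state k).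
Proof. by elim: k => [|k IHk]; [exact: invariant_init | exact: invariant_step]. Qed.

(* [step] does nothing once every vertex is chosen, so exactly one vertex is
   added per step until then. *)
Lemma size_chosen_state k : (k <= #|V|)%N -> size (chosen (state k)) = k.
Proof.
elim: k => [|k IHk] //= k_lt; rewrite {1}/step.
case sel: select => [p|] /=; first by rewrite size_rcons IHk // ltnW.
have := uniq_leq_size (enum_uniq V) (fun x _ => select_None tie_trans tie_total sel x).
by rewrite -cardT IHk ?(ltnW k_lt) // leqNgt k_lt.
Qed.

End Algorithm.

Theorem lemma2p1 (R : realFieldType) (V : finType) (e : rel V) (tau : V -> R)
  (eps : R) (le : rel V) (phi : V -> R)
  (e_sym : symmetric e) (e_irr : irreflexive e)
  (e_conn : forall x y : V, connect e x y)
  (tau_ge0 : forall v, 0 <= tau v)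
  (eps_gt0 : 0 < eps) (eps_le : eps <= 1 / 2)
  (le_anti : antisymmetric le) (le_trans : transitive le) (le_total : total le) :
  let n := #|V| in
  let tk := tau_k e tau eps le phi in
  let s := s_k e tau eps le phi in
     perm_eq (chosen (final_state e tau eps le phi)) (enum V) /\
      size (svals (final_state e tau eps le phi)) = n /\
      (forall v h, tk 1%N v h = tau v) /\
      (forall (k : nat) v h, (1 <= k < n)%N -> tk k.+1 v h <= tk k v h) /\
      (forall (k : nat) v h, (1 <= k <= n)%N -> 0 <= tk k v h) /\
      (forall (v0 : V) (k : nat), (1 <= k <= n)%N ->
          0 <= s k <= tau (P_k e tau eps le phi v0 k)) /\
      (forall k : nat, (1 <= k < n)%N -> s k <= s k.+1) /\
      (forall v : V,
          0 <= Tplus e tau eps le phi v - phi v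
       /\ Tplus e tau eps le phi v - phi v = phi v - Tminus e tau eps le phi v
       /\ Tplus e tau eps le phi v - phi v <= tau v).
Proof.
move=> n tk s; have eps_ge0 := ltW eps_gt0.
have inv k := @invariant_state R V e tau eps le phi tau_ge0 eps_ge0 k.
have [fin_uniq fin_size _ fin_bounds fin_sorted _] := inv n.
have size_chosen :=
  @size_chosen_state R V e tau eps le phi le_trans le_total n (leqnn n).
have size_svals : size (svals (final_state e tau eps le phi)) = n.
  by rewrite fin_size.
have perm_fin := uniq_card_perm_enum fin_uniq size_chosen.
do 3!split=> //.
split; first by move=> [|k] v h // _; apply: tauf_step_le.
split; first by move=> k v h _; case: (inv k.-1) => _ _ /(_ v h) /andP[].
split; first by move=> v0 [|k] // /andP[_ k_le]; apply: fin_bounds; rewrite size_svals.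
split; first by move=> [|k] // /andP[_ k_lt]; apply/(sortedP 0 fin_sorted); rewrite size_svals.
move=> v; rewrite /Tminus /Tplus.
have v_chosen : v \in chosen (final_state e tau eps le phi).
  by rewrite (perm_mem perm_fin) mem_enum.
have := fin_bounds v (index v (chosen (final_state e tau eps le phi))).
rewrite nth_index // fin_size index_mem => /(_ v_chosen) /andP[sv_ge0 sv_le].
by do ![split]; lra.
Qed.
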